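(* Let $A$ be a finite tree rooted at $e$, with all arcs directed from the root towards the leaves, let $R\subseteq V(A)$ be a set of destinations containing all leaves of $A$, and let $D\subseteq V(A)$. Let $u\neq e$ be a vertex of $A$ having exactly one child $u_1$, and let $(b,d,\mathrm{load})$ be the window of the solution $\mathcal{S}(D)$ on the arc $a^{u_1}$. Then the window of $\mathcal{S}(D)$ on the arc $a^{u}$ is \[ \begin{cases} (1,\ d+1,\ \mathrm{load}+1) & \text{if } u\in D,\\ (b+1,\ d,\ \mathrm{load}+b+1) & \text{if } u\notin D \text{ and } u\in R,\\ (b,\ d,\ \mathrm{load}+b) & \text{if } u\notin D \text{ and } u\notin R. \end{cases} \]
   Context: Setting (multicast with diffusing nodes): $A$ is a multicast tree for a request $(e,R)$: a tree rooted at the source $e$, arcs directed away from $e$, whose leaves lie in the destination set $R$. A set $D\subseteq V(A)$ is a set of diffusing (branching) nodes. The solution $\mathcal{S}(D)$ is a set of directed paths in $A$ such that: every node of $R$ is the final extremity of exactly one path; every node of $D$ is the final extremity of at most one path; the origin of each path is either $e$ or a node of $D$ which is itself the final extremity of some path; a node of $D$ lies on a path only as its origin or final extremity. As in the paper, $\mathcal{S}(D)$ is taken to be the solution in which each vertex $x\neq e$ of $R\cup D$ is the final extremity of exactly one path, whose origin is the nearest proper ancestor of $x$ belonging to $D\cup\{e\}$. For a vertex $u$, $A^u$ is the subtree of $A$ rooted at $u$, and for $u\neq e$, $a^u$ is the arc joining the parent of $u$ to $u$. The path number $\mathrm{pn}(u)$ is the number of paths of $\mathcal{S}(D)$ that pass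 through $u$ or terminate at $u$ (equivalently, that use the arc $a^u$). The window of $\mathcal{S}(D)$ on arc $a^u$ is the triple $(\mathrm{pn}(u),\ |D\cap V(A^u)|,\ \mathrm{load})$, where $\mathrm{load}=\sum_{w\in V(A^u)}\mathrm{pn}(w)$ is the load of $\mathcal{S}(D)$ in $A^u$, i.e. the number of pairs (path, arc) with the path using the arc, over the arcs of $A^u$ together with $a^u$. *)

From mathcomp Require Import all_boot.
Set Implicit Arguments. Unset Strict Implicit. Unset Printing Implicit Defensive.

(* A rooted tree on the vertex set T (a finType): root e, parent map p
   with p e = e (dummy value); the arcs are (p v, v) for v <> e,
   directed away from the root. *)

Section Tree.
Variables (T : finType) (e : T) (p : T -> T).

Definition anc (y x : T) : bool := connect (frel p) x y.

Definition panc (y x : T) : bool := (x != e) && anc y (p x).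

Definition is_rooted_tree : Prop := p e = e /\ forall x, anc e x.

Definition is_child (v u : T) : bool := (v != e) && (p v == u).

Definition is_leaf (v : T) : bool := [forall w, ~~ is_child w v].

Definition subtree (u : T) : {set T} := [set w | anc u w].

Variables (D R : {set T}).

Definition is_origin (o x : T) : bool :=
  [&& o \in D :|: [set e], panc o x &
      [forall z, ((z \in D :|: [set e]) && panc z x) ==> anc z o]].

(* pn w : number of paths of S(D) using the arc a^w.  The paths of S(D)
   are indexed by their final extremities x ∈ (R ∪ D) \ {e}; the path of x
   goes from its origin to x, and uses a^w iff w lies on it and is not its
   origin. *)
Definition pn (w : T) : nat :=
  #|[set x | [&& x \in R :|: D, x != e, anc w x &
               [exists o, is_origin o x && panc o w]]]|.

Definition load (u : T) : nat := \sum_(w in subtree u) pn w.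

Definition window (u : T) : nat * nat * nat :=
  (pn u, #|D :&: subtree u|, load u).

End Tree.

From mathcomp Require Import all_boot.
Set Implicit Arguments. Unset Strict Implicit.

(* When u has the single child u1, the subtree A^u is A^{u1} plus u, and the
   paths crossing a^u are those crossing a^{u1} plus possibly the path ending
   at u -- unless u is diffusing, in which case the paths below u start at u
   and only the path ending at u crosses a^u. *)

Section RootedTree.
Variables (T : finType) (e : T) (p : T -> T).
Hypothesis tree : is_rooted_tree e p.

Lemma ancP y x : reflect (exists n, iter n p x = y) (anc p y x).
Proof.
apply: (iffP idP) => [anc_yx | [n <-]]; last exact: fconnect_iter.
by exists (findex p x y); exact: iter_findex.
Qed.

Lemma anc_refl x : anc p x x. Proof. exact: connect0. Qed.

Lemma anc_parent x : anc p (p x) x. Proof. by apply/ancP; exists 1. Qed.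

Lemma anc_trans x y z : anc p y x -> anc p z y -> anc p z x.
Proof. exact: connect_trans. Qed.

Lemma anc_eq_or_parent y x : anc p y x -> x = y \/ anc p y (p x).
Proof.
case/ancP=> [[|n] iter_xy]; first by left.
by right; apply/ancP; exists n; rewrite -iterSr.
Qed.

Lemma iter_root n : iter n p e = e.
Proof. by apply: iter_fix; case: tree. Qed.

(* A periodic point is eventually mapped to e, hence equal to e. *)
Lemma periodic_root n x : iter n.+1 p x = x -> x = e.
Proof.
move=> per_x; case: tree => _ /(_ x) /ancP [k depth_x].
have k_le : k <= k * n.+1 by rewrite leq_pmulr.
have := iter_fix k per_x; rewrite -iterM -(subnK k_le) iterD depth_x.
by rewrite iter_root => ->.
Qed.

Lemma anc_antisym x y : anc p x y -> anc p y x -> x = y.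
Proof.
case/ancP=> [[|n] iter_yx] /ancP [m iter_xy]; first by [].
have x_e : x = e by apply: (@periodic_root (n + m)); rewrite -addSn iterD iter_xy.
by rewrite -iter_xy x_e iter_root.
Qed.

Lemma anc_parentN x : x != e -> ~~ anc p x (p x).
Proof.
move=> /eqP x_ne_e; apply/negP => /anc_antisym/(_ (anc_parent x)) px_x.
by apply: x_ne_e; apply: (@periodic_root 0).
Qed.

Variables D R : {set T}.

Definition users (w : T) : {set T} :=
  [set x | [&& x \in R :|: D, x != e, anc p w x &
              [exists o, is_origin e p D o x && panc e p o w]]].

Lemma pnE w : pn e p D R w = #|users w|. Proof. by []. Qed.

Lemma origin_exists x : x != e -> exists o, is_origin e p D o x.
Proof.
case: tree => _ /(_ x) /ancP [n]; elim: n x => [|n IHn] x /= depth_x x_ne_e.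
  by rewrite depth_x eqxx in x_ne_e.
case px_stop : (p x \in D :|: [set e]).
  exists (p x); rewrite /is_origin px_stop /panc x_ne_e anc_refl /=.
  by apply/forallP => z; apply/implyP => /andP [_ ->].
have px_ne_e : p x != e by apply: contraFneq px_stop => ->; rewrite !inE eqxx orbT.
have depth_px : iter n p (p x) = e by rewrite -iterSr.
have [o /and3P [o_stop o_panc /forallP o_max]] := IHn (p x) depth_px px_ne_e.
exists o; rewrite /is_origin o_stop /panc x_ne_e /=.
apply/andP; split; first by apply: anc_trans (anc_parent _) _; case/andP: o_panc.
apply/forallP => z; apply/implyP => /andP [z_stop /anc_eq_or_parent z_anc].
apply: (implyP (o_max z)); rewrite z_stop /panc px_ne_e /=.
by case: z_anc => // z_px; rewrite -z_px px_stop in z_stop.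
Qed.

Lemma origin_panc o x : is_origin e p D o x -> panc e p o x.
Proof. by case/and3P. Qed.

Lemma panc_notin_D o w :
  w \notin D -> w != e -> o \in D :|: [set e] -> panc e p o w = anc p o w.
Proof.
move=> w_notin_D w_ne_e o_stop; rewrite /panc w_ne_e /=.
apply/idP/idP => [|/anc_eq_or_parent [w_o|//]]; first exact: anc_trans (anc_parent w).
by rewrite -w_o !inE (negbTE w_notin_D) (negbTE w_ne_e) in o_stop.
Qed.

Lemma mem_users_self w : w != e -> (w \in users w) = (w \in R :|: D).
Proof.
move=> w_ne_e; rewrite !inE w_ne_e anc_refl /=; apply/andb_idr => _.
have [o o_orig] := origin_exists w_ne_e.
by apply/existsP; exists o; rewrite o_orig origin_panc.
Qed.

(* A path crossing a^w below a diffusing w would have an origin strictly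
   above w although w is a nearer candidate. *)
Lemma users_in_D w : w \in D -> w != e -> users w = [set w].
Proof.
move=> w_in_D w_ne_e; apply/setP => x; rewrite inE.
have [-> | x_ne_w] := eqVneq x w; first by rewrite mem_users_self // inE w_in_D orbT.
apply/negbTE/negP; rewrite inE => /and4P [_ x_ne_e anc_wx /existsP [o /andP [o_orig o_panc]]].
case: (anc_eq_or_parent anc_wx) => [x_w | anc_wpx]; first by rewrite x_w eqxx in x_ne_w.
case/and3P: o_orig => _ _ /forallP /(_ w) /implyP.
rewrite !inE w_in_D /panc x_ne_e anc_wpx => /(_ isT) anc_wo.
case/andP: o_panc => _ anc_opw.
by move: (anc_parentN w_ne_e); rewrite (anc_trans anc_opw anc_wo).
Qed.

End RootedTree.

Section UniqueChild.
Variables (T : finType) (e : T) (p : T -> T) (D R : {set T}) (u u1 : T).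
Hypothesis tree : is_rooted_tree e p.
Hypothesis u_ne_e : u != e.
Hypothesis unique_child : forall v, is_child e p v u = (v == u1).

Lemma unique_child_parent : (u1 != e) /\ p u1 = u.
Proof. by have := unique_child u1; rewrite eqxx => /andP [-> /eqP]. Qed.

Lemma anc_unique_child w : anc p u w = (w == u) || anc p u1 w.
Proof.
apply/idP/idP => [/ancP [n] | /orP [/eqP -> | anc_u1w]]; last 2 first.
- exact: anc_refl.
- by apply: anc_trans anc_u1w _; case: unique_child_parent => _ <-; exact: anc_parent.
elim: n w => [|n IHn] w /= iter_wu; first by rewrite iter_wu eqxx.
have [-> // | w_ne_u] := eqVneq w u; apply/orP; right.
have [pw_u | pw_ne_u] := eqVneq (p w) u.
  have w_ne_e : w != e by apply: contra_neq u_ne_e => w_e; rewrite -pw_u w_e; case: tree.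
  have : is_child e p w u by rewrite /is_child w_ne_e pw_u eqxx.
  by rewrite unique_child => /eqP ->; exact: anc_refl.
apply: anc_trans (anc_parent p w) _.
by move: (IHn (p w)); rewrite -iterSr (negbTE pw_ne_u) => /(_ iter_wu).
Qed.

Lemma unique_child_ancN : ~~ anc p u1 u.
Proof.
apply/negP => anc_u1u; case: unique_child_parent => u1_ne_e pu1.
have anc_uu1 : anc p u u1 by rewrite -pu1; exact: anc_parent.
by move: (anc_parentN tree u1_ne_e); rewrite pu1 (anc_antisym tree anc_u1u anc_uu1) anc_refl.
Qed.

Lemma subtree_unique_child : subtree p u = u |: subtree p u1.
Proof. by apply/setP => w; rewrite !inE anc_unique_child. Qed.

Lemma notin_subtree_child : u \notin subtree p u1.
Proof. by rewrite inE unique_child_ancN. Qed.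

Lemma users_notin_D : u \notin D -> users e p D R u :\ u = users e p D R u1.
Proof.
move=> u_notin_D; case: unique_child_parent => u1_ne_e pu1.
apply/setP => x; rewrite !inE anc_unique_child.
have [-> | x_ne_u] := eqVneq x u; first by rewrite (negbTE unique_child_ancN) !andbF.
case: (anc p u1 x); rewrite ?andbF //=; congr [&& _, _ & _].
apply/existsP/existsP => -[o /andP [o_orig o_panc]]; exists o; rewrite o_orig /=;
  have o_stop : o \in D :|: [set e] by case/and3P: o_orig.
- by rewrite /panc u1_ne_e pu1 -(panc_notin_D p u_notin_D u_ne_e o_stop).
- by move: o_panc; rewrite /panc u1_ne_e pu1 -(panc_notin_D p u_notin_D u_ne_e o_stop).
Qed.

Lemma pn_unique_child :
  pn e p D R u = if u \in D then 1 else (u \in R) + pn e p D R u1.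
Proof.
rewrite !pnE; case: ifPn => [u_in_D | u_notin_D].
  by rewrite users_in_D ?cards1.
rewrite (cardsD1 u) mem_users_self // -users_notin_D // !inE.
by rewrite (negbTE u_notin_D) orbF.
Qed.

Lemma load_unique_child : load e p D R u = pn e p D R u + load e p D R u1.
Proof. by rewrite /load subtree_unique_child big_setU1 //= notin_subtree_child. Qed.

Lemma card_D_subtree_unique_child :
  #|D :&: subtree p u| = (u \in D) + #|D :&: subtree p u1|.
Proof.
rewrite subtree_unique_child setIUr; case: (boolP (u \in D)) => [u_in_D | u_notin_D].
  by rewrite (setIidPr _) ?sub1set // cardsU1 in_setI (negbTE notin_subtree_child) andbF.
suff -> : D :&: [set u] = set0 by rewrite set0U.
by apply/setP => x; rewrite !inE; case: eqP => [->|]; rewrite ?(negbTE u_notin_D) ?andbF.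
Qed.

End UniqueChild.

Theorem lemma1 (T : finType) (e : T) (p : T -> T) (R D : {set T})
  (Htree : is_rooted_tree e p)
  (HR : forall v, is_leaf e p v -> v \in R)
  (u u1 : T) (Hu : u != e)
  (Hchild : forall v, is_child e p v u = (v == u1)) :
  let: (b, d, ld) := window e p D R u1 in
  window e p D R u =
    if u \in D then (1, d.+1, ld.+1)
    else if u \in R then (b.+1, d, ld + b.+1)
    else (b, d, ld + b).
Proof.
rewrite /window /= (load_unique_child D R Htree Hu Hchild).
rewrite (card_D_subtree_unique_child D Htree Hu Hchild) (pn_unique_child D R Htree Hu Hchild).
by case: (u \in D); case: (u \in R); rewrite /= ?add0n ?add1n // addnC.
Qed.
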